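(* Let $\mathscr{A}=\{A_1,\ldots,A_r\}$ be an irreducible set of real $d\times d$ matrices, $\|\cdot\|$ a norm on $\mathbb{R}^d$, and $p\ge d-1$ an integer. Suppose that for some nonzero $x_*\in\mathbb{R}^d$, some word $F\in\mathscr{A}_\infty$ and some $\nu>0$ we have $\|Fx_*\|\ge \nu\|x_*\|$. Then for every nonzero $x\in\mathbb{R}^d$ there is a word $G\in\mathscr{A}_p$ such that $F_x=FG\in\mathscr{A}_\infty$ satisfies $\mathrm{len}(F)\le\mathrm{len}(F_x)\le\mathrm{len}(F)+p$ and \[ \|F_x x\|\ge \nu\,\chi_p(\mathscr{A})\,\|x\|. \]
   Context: Irreducible: the matrices in $\mathscr{A}$ have no common invariant subspace other than $\{0\}$ and $\mathbb{R}^d$. $\mathscr{A}^k$ is the set of products of $k$ matrices from $\mathscr{A}$, $\mathscr{A}^0=\{I\}$. $\mathscr{A}_\infty=\bigcup_{k\ge1}\mathscr{A}^k$; elements are regarded as products $A_{i_q}\cdots A_{i_1}$ of factors from $\mathscr{A}$, and the number $q$ of factors is the length $\mathrm{len}$ (the identity $I\in\mathscr{A}^0$ has length $0$). $\mathscr{A}_p=\bigcup_{k=0}^p\mathscr{A}^k$, $\mathscr{A}_p(x)=\{Ax: A\in\mathscr{A}_p\}$. $\mathbf{S}(t)$ is the closed ball of radius $t$ about $0$ in $\|\cdot\|$. The $p$-measure of irreducibility is $\chi_p(\mathscr{A})=\inf_{\|x\|=1}\sup\{t\ge0:\mathbf{S}(t)\subseteq\mathrm{conv}(\mathscr{A}_p(x)\cup\mathscr{A}_p(-x))\}$.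 *)

From Stdlib Require Import Reals.
From mathcomp Require Import all_boot.
Set Implicit Arguments. Unset Strict Implicit. Unset Printing Implicit Defensive.
Local Open Scope R_scope.

Definition vec (d : nat) := 'I_d -> R.
Definition mat (d : nat) := 'I_d -> 'I_d -> R.

Definition vzero (d : nat) : vec d := fun _ => 0.
Definition vadd (d : nat) (x y : vec d) : vec d := fun i => x i + y i.
Definition vscale (d : nat) (c : R) (x : vec d) : vec d := fun i => c * x i.
Definition vopp (d : nat) (x : vec d) : vec d := fun i => - x i.

Definition mulmv (d : nat) (A : mat d) (x : vec d) : vec d :=
  fun i => \big[Rplus/0]_(j < d) (A i j * x j).
Definition mulmm (d : nat) (A B : mat d) : mat d :=
  fun i k => \big[Rplus/0]_(j < d) (A i j * B j k).
Definition idm (d : nat) : mat d := fun i j => if i == j then 1 else 0.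

Definition is_norm (d : nat) (N : vec d -> R) : Prop :=
  (forall x, 0 <= N x) /\
  (forall x, N x = 0 -> forall i, x i = 0) /\
  (forall c x, N (vscale c x) = Rabs c * N x) /\
  (forall x y, N (vadd x y) <= N x + N y).

Definition is_subspace (d : nat) (V : vec d -> Prop) : Prop :=
  V (@vzero d) /\
  (forall x y, V x -> V y -> V (vadd x y)) /\
  (forall c x, V x -> V (vscale c x)).

Definition irreducible (d : nat) (As : seq (mat d)) : Prop :=
  forall V : vec d -> Prop, is_subspace V ->
    (forall A x, List.In A As -> V x -> V (mulmv A x)) ->
    (forall x, V x -> forall i, x i = 0) \/ (forall x, V x).

(* words: a list [:: B_1; ...; B_q] of factors from As denotes the product
   B_q * ... * B_1; its length is size w.  The empty word is I (length 0). *)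
Definition is_word (d : nat) (As : seq (mat d)) (w : seq (mat d)) : Prop :=
  forall A, List.In A w -> List.In A As.

Fixpoint wordmat (d : nat) (w : seq (mat d)) : mat d :=
  match w with
  | [::] => @idm d
  | A :: w' => mulmm (wordmat w') A
  end.
(* Note: wordmat (g ++ f) = wordmat f * wordmat g, i.e. the word F G. *)

Definition orbit_pm (d : nat) (As : seq (mat d)) (p : nat) (x : vec d)
  (z : vec d) : Prop :=
  exists w, is_word As w /\ (size w <= p)%N /\
    (z = mulmv (wordmat w) x \/ z = mulmv (wordmat w) (vopp x)).

Definition in_conv (d : nat) (S : vec d -> Prop) (y : vec d) : Prop :=
  exists l : seq (R * vec d),
    (forall c, List.In c l -> 0 <= c.1 /\ S c.2) /\
    foldr (fun c s => c.1 + s) 0 l = 1 /\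
    (forall i, y i = foldr (fun c s => c.1 * c.2 i + s) 0 l).

Definition ball_in_conv (d : nat) (N : vec d -> R) (As : seq (mat d))
  (p : nat) (x : vec d) (t : R) : Prop :=
  0 <= t /\ (forall y, N y <= t -> in_conv (orbit_pm As p x) y).

Definition is_sup (S : R -> Prop) (s : R) : Prop :=
  (forall t, S t -> t <= s) /\ (forall b, (forall t, S t -> t <= b) -> s <= b).
Definition is_inf (S : R -> Prop) (s : R) : Prop :=
  (forall t, S t -> s <= t) /\ (forall b, (forall t, S t -> b <= t) -> b <= s).

Definition chi_p_is (d : nat) (As : seq (mat d)) (N : vec d -> R) (p : nat)
  (c : R) : Prop :=
  is_inf (fun v => exists x, N x = 1 /\ is_sup (ball_in_conv N As p x) v) c.

Definition vnonzero (d : nat) (x : vec d) : Prop := exists i, x i <> 0.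

(* Put x0 = x / N x, so N x0 = 1 and chi <= sup T, where T is the set
   of radii t >= 0 with S(t) ⊆ conv(A_p(x0) ∪ A_p(-x0)).  For t ∈ T the vector
   y = (t / N xs) xs lies in S(t), hence is a convex combination of points
   ±G x0 with G ∈ A_p; as z ↦ N (F z) is convex and even, one of these points
   gives N (F G x0) >= N (F y) >= t nu.  Since t ∈ T can be taken above any
   t < chi, and there are finitely many words G ∈ A_p, the word maximizing
   N (F G x0) satisfies N (F G x0) >= chi nu; rescaling by N x concludes. *)
From HB Require Import structures.
From Stdlib Require Import Reals Lra FunctionalExtensionality Classical.
From mathcomp Require Import all_boot.
Set Implicit Arguments. Unset Strict Implicit.
Local Open Scope R_scope.

(* Real addition is a commutative monoid law, so that the generic big-operator
   lemmas apply to the sums [\big[Rplus/0]] of the definitions. *)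
HB.instance Definition _ := Monoid.isComLaw.Build R (IZR 0) Rplus
  (fun a b c => esym (Rplus_assoc a b c)) Rplus_comm Rplus_0_l.

Lemma mulmv_scale d (A : mat d) c v :
  mulmv A (vscale c v) = vscale c (mulmv A v).
Proof.
apply: functional_extensionality => i; rewrite /mulmv /vscale.
rewrite (big_endo (fun s => c * s)); last by ring.
  by apply: eq_bigr => j _; ring.
by move=> a b; ring.
Qed.

Lemma mulmv_add d (A : mat d) u v :
  mulmv A (vadd u v) = vadd (mulmv A u) (mulmv A v).
Proof.
apply: functional_extensionality => i; rewrite /mulmv /vadd -big_split /=.
by apply: eq_bigr => j _; ring.
Qed.

Lemma mulmv_zero d (A : mat d) : mulmv A (@vzero d) = @vzero d.
Proof.
apply: functional_extensionality => i; rewrite /mulmv /vzero.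
by rewrite big1 // => j _; ring.
Qed.

Lemma mulmv_opp d (A : mat d) v : mulmv A (vopp v) = vopp (mulmv A v).
Proof.
have opp_scale (u : vec d) : vopp u = vscale (-1) u.
  by apply: functional_extensionality => i; rewrite /vscale /vopp; ring.
by rewrite !opp_scale mulmv_scale.
Qed.

Lemma mulmv_mulmm d (A B : mat d) v :
  mulmv (mulmm A B) v = mulmv A (mulmv B v).
Proof.
apply: functional_extensionality => i; rewrite /mulmv /mulmm.
transitivity (\big[Rplus/0]_(j < d) \big[Rplus/0]_(k < d) (A i k * B k j * v j)).
  apply: eq_bigr => j _.
  rewrite (big_endo (fun s => s * v j)) //; last by ring.
  by move=> a b; ring.
rewrite exchange_big /=; apply: eq_bigr => k _.
rewrite (big_endo (fun s => A i k * s)); last by ring.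
  by apply: eq_bigr => j _; ring.
by move=> a b; ring.
Qed.

Lemma mulmv_id d v : mulmv (@idm d) v = v.
Proof.
apply: functional_extensionality => i; rewrite /mulmv /idm.
rewrite (bigD1 i) //= eqxx big1 /=; first by ring.
by move=> j /negbTE; rewrite eq_sym => ->; ring.
Qed.

Lemma wordmat_cat d (G F : seq (mat d)) v :
  mulmv (wordmat (G ++ F)) v = mulmv (wordmat F) (mulmv (wordmat G) v).
Proof.
elim: G v => [|A G IH] v /=; first by rewrite mulmv_id.
by rewrite !mulmv_mulmm IH.
Qed.

Section Norm.
Variables (d : nat) (N : vec d -> R).
Hypothesis HN : is_norm N.

Lemma norm_scale c v : N (vscale c v) = Rabs c * N v.
Proof. by case: HN => _ [_ [Hs _]]. Qed.

Lemma norm_triangle u v : N (vadd u v) <= N u + N v.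
Proof. by case: HN => _ [_ [_ Ht]]. Qed.

Lemma norm_zero : N (@vzero d) = 0.
Proof.
have -> : @vzero d = vscale 0 (@vzero d).
  by apply: functional_extensionality => i; rewrite /vscale /vzero; ring.
by rewrite norm_scale Rabs_R0; ring.
Qed.

Lemma norm_opp v : N (vopp v) = N v.
Proof.
have -> : vopp v = vscale (-1) v.
  by apply: functional_extensionality => i; rewrite /vscale /vopp; ring.
by rewrite norm_scale Rabs_Ropp Rabs_R1; ring.
Qed.

Lemma norm_pos v : vnonzero v -> 0 < N v.
Proof.
case: HN => Hnn [Hdef _] [i Hi].
by case: (Hnn v) => // /esym /Hdef; move/(_ i).
Qed.

Lemma norm_normalize v : vnonzero v -> N (vscale (/ N v) v) = 1.
Proof.
move=> /norm_pos Nv; rewrite norm_scale Rabs_pos_eq.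
  by field; lra.
by apply/Rlt_le/Rinv_0_lt_compat.
Qed.

End Norm.

Definition conv_point d (l : seq (R * vec d)) : vec d :=
  fun i => foldr (fun c s => c.1 * c.2 i + s) 0 l.

Lemma exists_max (T : Type) (a : T -> R) (l : seq T) : l <> [::] ->
  exists c, List.In c l /\ forall c', List.In c' l -> a c' <= a c.
Proof.
elim: l => [|c l IH] // _.
case: l IH => [|c2 l] IH.
  by exists c; split; [left | move=> c' [<-|[]]; apply: Rle_refl].
have [m [Hm Hmax]] := IH ltac:(by []).
case: (Rle_lt_dec (a c) (a m)) => h.
  by exists m; split; [right | move=> c' [<-|/Hmax]].
exists c; split; first by left.
move=> c' [<-|/Hmax]; [exact: Rle_refl | lra].
Qed.

Lemma weighted_sum_le (T : Type) (a : R * T -> R) l M :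
  (forall c, List.In c l -> 0 <= c.1) -> (forall c, List.In c l -> a c <= M) ->
  foldr (fun c s => c.1 * a c + s) 0 l <= M * foldr (fun c s => c.1 + s) 0 l.
Proof.
elim: l => [|c l IH] Hw HM /=; first lra.
have Hrest := IH (fun c' h => Hw c' (or_intror h)) (fun c' h => HM c' (or_intror h)).
have : c.1 * a c <= c.1 * M by apply: Rmult_le_compat_l; [apply: Hw | apply: HM]; left.
lra.
Qed.

Section Convexity.
Variables (d : nat) (N : vec d -> R).
Hypothesis HN : is_norm N.

Lemma norm_conv_point_le (A : mat d) l :
  (forall c, List.In c l -> 0 <= c.1) ->
  N (mulmv A (conv_point l)) <= foldr (fun c s => c.1 * N (mulmv A c.2) + s) 0 l.
Proof.
elim: l => [|c l IH] Hw.
  have -> : conv_point [::] = @vzero d by apply: functional_extensionality.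
  by rewrite mulmv_zero norm_zero //; apply: Rle_refl.
have -> : conv_point (c :: l) = vadd (vscale c.1 c.2) (conv_point l).
  by apply: functional_extensionality.
have Hc : 0 <= c.1 by apply: Hw; left.
have Hrest := IH (fun c' h => Hw c' (or_intror h)).
rewrite mulmv_add mulmv_scale /=.
apply: Rle_trans (norm_triangle HN _ _) _.
rewrite norm_scale // Rabs_pos_eq //; lra.
Qed.

Lemma conv_dominated (A : mat d) (S : vec d -> Prop) y :
  in_conv S y -> exists z, S z /\ N (mulmv A y) <= N (mulmv A z).
Proof.
move=> [l [Hl [Hsum Hy]]].
have -> : y = conv_point l by apply: functional_extensionality.
have Hw c : List.In c l -> 0 <= c.1 by case/Hl.
have Hne : l <> [::] by move=> El; rewrite El /= in Hsum; lra.
have [m [Hm Hmax]] := exists_max (fun c => N (mulmv A c.2)) Hne.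
exists m.2; split; first by case: (Hl m Hm).
apply: Rle_trans (norm_conv_point_le A Hw) _.
have := weighted_sum_le Hw Hmax.
by rewrite Hsum /=; lra.
Qed.

End Convexity.

Fixpoint words (T : Type) (As : seq T) (k : nat) : seq (seq T) :=
  if k is k'.+1 then
    [::] :: List.flat_map (fun A => List.map (cons A) (words As k')) As
  else [:: [::]].

Lemma words_spec d (As : seq (mat d)) k w :
  List.In w (words As k) <-> is_word As w /\ (size w <= k)%N.
Proof.
elim: k w => [|k IH] w /=.
  split; first by case=> [<-|[]]; split=> // A [].
  by case: w => [|A w] [] //; left.
rewrite List.in_flat_map; split.
  case=> [<-|[A [HA /List.in_map_iff [w' [<- /IH [Hw' Hs]]]]]].
    by split=> // A [].
  by split=> // B /= [<-|/Hw'].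
case: w => [|A w] [Hw Hs]; first by left.
right; exists A; split; first by apply: Hw; left.
apply/List.in_map_iff; exists w; split=> //.
by apply/IH; split=> // B HB; apply: Hw; right.
Qed.

Lemma words_nonnil (T : Type) (As : seq T) k : words As k <> [::].
Proof. by case: k. Qed.

Section Radii.
Variables (d : nat) (As : seq (mat d)) (N : vec d -> R) (p : nat).
Hypothesis HN : is_norm N.

(* The radius 0 is always admissible: y with N y = 0 is 0 = (x + (-x)) / 2. *)
Lemma ball_in_conv_0 x : ball_in_conv N As p x 0.
Proof.
split; first exact: Rle_refl.
move=> y Hy.
have Hy0 : N y = 0 by case: HN => Hnn _; have := Hnn y; lra.
have Hzero i : y i = 0 by case: HN => _ [Hdef _]; apply: Hdef.
exists [:: (/2, mulmv (wordmat [::]) x); (/2, mulmv (wordmat [::]) (vopp x))].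
split; last split.
- by move=> c [<-|[<-|[]]]; (split; first by simpl; lra);
    exists [::]; do 2!split=> //; [left | right].
- by simpl; field.
- by move=> i /=; rewrite !mulmv_id Hzero /vopp; field.
Qed.

Lemma admissible_radius_gt chi x t :
  chi_p_is As N p chi -> N x = 1 -> t < chi ->
  exists t', ball_in_conv N As p x t' /\ t < t'.
Proof.
move=> [Hchi _] Nx Ht.
apply: NNPP => Hnone.
have Hbound : bound (ball_in_conv N As p x).
  exists t => t' Ht'; apply: Rnot_lt_le => Hlt; apply: Hnone; by exists t'.
have [m [Hub Hlub]] := completeness _ Hbound (ex_intro _ 0 (ball_in_conv_0 x)).
have Hchim : chi <= m by apply: Hchi; exists x; split.
have : m <= t.
  by apply: Hlub => t' Ht'; apply: Rnot_lt_le => Hlt; apply: Hnone; exists t'.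
lra.
Qed.

(* An admissible radius t for x yields a word G ∈ A_p with
   N (F G x) >= t nu, by testing the ball S(t) on a rescaled xs. *)
Lemma admissible_radius_word (F : mat d) xs nu x t :
  vnonzero xs -> N (mulmv F xs) >= nu * N xs -> ball_in_conv N As p x t ->
  exists G, is_word As G /\ (size G <= p)%N /\
    t * nu <= N (mulmv F (mulmv (wordmat G) x)).
Proof.
move=> Hxs HFxs [Ht Hball].
have Nxs := norm_pos HN Hxs.
have Hc : 0 <= t / N xs by apply: Rmult_le_pos => //; apply/Rlt_le/Rinv_0_lt_compat.
pose y := vscale (t / N xs) xs.
have Ny : N y <= t by rewrite /y norm_scale // Rabs_pos_eq //; apply: Req_le; field; lra.
have [z [[G [HG [HGs Hz]]] Hdom]] := conv_dominated HN F (Hball y Ny).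
exists G; do 2!split=> //.
have -> : N (mulmv F (mulmv (wordmat G) x)) = N (mulmv F z).
  by case: Hz => ->; rewrite ?mulmv_opp ?(norm_opp HN).
apply: Rle_trans Hdom.
rewrite /y mulmv_scale norm_scale // Rabs_pos_eq //.
have -> : t * nu = t / N xs * (nu * N xs) by field; lra.
by apply: Rmult_le_compat_l => //; apply: Rge_le.
Qed.

End Radii.

Lemma le_scaled_of_forall_lt c nu a :
  0 < nu -> (forall t, t < c -> t * nu <= a) -> c * nu <= a.
Proof.
move=> Hnu H; apply: Rnot_lt_le => Hlt.
have Hb : a / nu < c.
  apply: (Rmult_lt_reg_r nu) => //; have -> : a / nu * nu = a by field; lra.
  lra.
have := H ((a / nu + c) / 2) ltac:(lra).
have -> : (a / nu + c) / 2 * nu = (a + c * nu) / 2 by field; lra.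
lra.
Qed.

Theorem lemma2 (d : nat) (As : seq (mat d)) (N : vec d -> R) (p : nat)
  (chi : R) :
  irreducible As -> is_norm N -> (d - 1 <= p)%N -> chi_p_is As N p chi ->
  forall (xs : vec d) (F : seq (mat d)) (nu : R),
    vnonzero xs -> is_word As F -> (1 <= size F)%N -> 0 < nu ->
    N (mulmv (wordmat F) xs) >= nu * N xs ->
  forall x : vec d, vnonzero x ->
    exists G : seq (mat d),
      is_word As G /\ (size G <= p)%N /\
      (size F <= size (G ++ F) <= size F + p)%N /\
      N (mulmv (wordmat (G ++ F)) x) >= nu * chi * N x.
Proof.
move=> _ HN _ Hchi xs F nu Hxs _ _ Hnu HFxs x Hx.
pose x0 := vscale (/ N x) x.
have Nx0 : N x0 = 1 := norm_normalize HN Hx.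
pose f G := N (mulmv (wordmat F) (mulmv (wordmat G) x0)).
have [G [/words_spec [HG HGs] Hbest]] := exists_max f (l := words As p)
  (@words_nonnil _ As p).
have HfG : chi * nu <= f G.
  apply: le_scaled_of_forall_lt => // t Ht.
  have [t' [Ht' Htt']] := admissible_radius_gt HN Hchi Nx0 Ht.
  have [G' [HG' [HG's Hf']]] := admissible_radius_word HN Hxs HFxs Ht'.
  have := Hbest G' (proj2 (words_spec _ _ _) (conj HG' HG's)).
  have := Rmult_le_compat_r nu _ _ (Rlt_le _ _ Hnu) (Rlt_le _ _ Htt').
  rewrite /f; lra.
exists G; do 2!split=> //; split.
  by rewrite size_cat leq_addl /= addnC leq_add2l.
have Nx := norm_pos HN Hx.
have -> : N (mulmv (wordmat (G ++ F)) x) = N x * f G.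
  rewrite wordmat_cat /f /x0 !mulmv_scale norm_scale // Rabs_pos_eq.
    by field; lra.
  by apply/Rlt_le/Rinv_0_lt_compat.
have := Rmult_le_compat_l (N x) _ _ (Rlt_le _ _ Nx) HfG; lra.
Qed.
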